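(* Let $N\ge 1$, $m\ge1$ and $m_1,\dots,m_N\ge 1$ be integers. For $t=1,\dots,N$ let $D^{(t)}\in\mathbb{R}^{m\times m_t}$ be given matrices, and let $\bm{a}^{(t)}\in\mathbb{R}^{m_t}$ satisfy $\bm{a}^{(t)}\ge 0$ and $\bm{e}_{m_t}^\top\bm{a}^{(t)}=1$. Consider the primal problem $$(\mathrm{P})\quad \min_{\bm{w}\in\mathbb{R}^m,\,\Pi^{(t)}\in\mathbb{R}^{m\times m_t}}\ \delta_{\Delta_m}(\bm{w})+\sum_{t=1}^N\delta^t_+(\Pi^{(t)})+\sum_{t=1}^N\langle D^{(t)},\Pi^{(t)}\rangle\quad\text{s.t.}\quad \Pi^{(t)}\bm{e}_{m_t}=\bm{w},\ (\Pi^{(t)})^\top\bm{e}_m=\bm{a}^{(t)},\ t=1,\dots,N,$$ and the dual-type problem $$(\mathrm{D})\quad \min_{\bm{u}\in\mathbb{R}^m,\,V^{(t)}\in\mathbb{R}^{m\times m_t},\,\bm{y}^{(t)}\in\mathbb{R}^m,\,\bm{z}^{(t)}\in\mathbb{R}^{m_t}}\ \delta^*_{\Delta_m}(\bm{u})+\sum_{t=1}^N\delta^t_+(V^{(t)})+\sum_{t=1}^N\langle\bm{z}^{(t)},\bm{a}^{(t)}\rangle$$ $$\text{s.t.}\quad \sum_{t=1}^N\bm{y}^{(t)}-\bm{u}=0,\qquad V^{(t)}-D^{(t)}-\bm{y}^{(t)}\bm{e}_{m_t}^\top-\bm{e}_m(\bm{z}^{(t)})^\top=0,\ t=1,\dots,N.$$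 Consider the KKT system for (P) in the unknowns $(\bm{w},\{\Pi^{(t)}\},\{\bm{y}^{(t)}\},\{\bm{z}^{(t)}\})$: $$0\in\partial\delta_{\Delta_m}(\bm{w})-\sum_{t=1}^N\bm{y}^{(t)},\quad 0\in\partial\delta^t_+(\Pi^{(t)})+D^{(t)}+\bm{y}^{(t)}\bm{e}_{m_t}^\top+\bm{e}_m(\bm{z}^{(t)})^\top,\quad \Pi^{(t)}\bm{e}_{m_t}=\bm{w},\quad (\Pi^{(t)})^\top\bm{e}_m=\bm{a}^{(t)}\quad(\forall t),$$ and the KKT system for (D) in the unknowns $(\bm{u},\{V^{(t)}\},\{\bm{y}^{(t)}\},\{\bm{z}^{(t)}\},\bm{\lambda},\{\Lambda^{(t)}\})$ with $\bm{\lambda}\in\mathbb{R}^m$, $\Lambda^{(t)}\in\mathbb{R}^{m\times m_t}$: $$0\in\partial\delta^*_{\Delta_m}(\bm{u})-\bm{\lambda},\quad 0\in\partial\delta^t_+(V^{(t)})+\Lambda^{(t)},\quad \Lambda^{(t)}\bm{e}_{m_t}=\bm{\lambda},\quad (\Lambda^{(t)})^\top\bm{e}_m=\bm{a}^{(t)},$$ $$\sum_{t=1}^N\bm{y}^{(t)}-\bm{u}=0,\quad V^{(t)}-D^{(t)}-\bm{y}^{(t)}\bm{e}_{m_t}^\top-\bm{e}_m(\bm{z}^{(t)})^\top=0\quad(\forall t).$$ Then: (i) (P) has an optimal solution and the solution set of the KKT system for (P) is nonempty; (ii) (D) has an optimal solution and the solution set of the KKT system for (D) is nonempty; (iii) if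 $(\bm{u}^*,\{V^{(t),*}\},\{\bm{y}^{(t),*}\},\{\bm{z}^{(t),*}\},\bm{\lambda}^*,\{\Lambda^{(t),*}\})$ solves the KKT system for (D), then $(\bm{u}^*,\{V^{(t),*}\},\{\bm{y}^{(t),*}\},\{\bm{z}^{(t),*}\})$ is an optimal solution of (D) and $(\bm{\lambda}^*,\{\Lambda^{(t),*}\})$ (as $(\bm{w},\{\Pi^{(t)}\})$) is an optimal solution of (P).
   Context: $\bm{e}_k$ denotes the all-ones vector in $\mathbb{R}^k$. $\Delta_m=\{\bm{w}\in\mathbb{R}^m:\bm{e}_m^\top\bm{w}=1,\ \bm{w}\ge0\}$ is the unit simplex; $\delta_{\Delta_m}$ is its indicator function (0 on $\Delta_m$, $+\infty$ outside) and $\delta^*_{\Delta_m}$ its convex conjugate, $\delta^*_{\Delta_m}(\bm{u})=\max_i u_i$. $\delta^t_+$ is the indicator function of the nonnegative orthant $\{\Pi\in\mathbb{R}^{m\times m_t}:\Pi\ge0\}$ (entrywise). $\partial$ denotes the convex subdifferential and $\langle X,Y\rangle=\sum_{ij}x_{ij}y_{ij}$. *)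

From HB Require Import structures.
From mathcomp Require Import all_boot all_order all_algebra.
From mathcomp Require Import boolp classical_sets reals constructive_ereal ereal.
Set Implicit Arguments. Unset Strict Implicit. Unset Printing Implicit Defensive.
Import Order.TTheory GRing.Theory Num.Theory.
Local Open Scope ring_scope.
Local Open Scope ereal_scope.

Section Defs.
Variable R : realType.

Definition ones (k : nat) : 'cV[R]_k := const_mx 1%R.

Definition mxdot (p q : nat) (X Y : 'M[R]_(p, q)) : R :=
  (\sum_(i < p) \sum_(j < q) X i j * Y i j)%R.

Definition indicator (p q : nat) (S : set 'M[R]_(p, q)) (X : 'M[R]_(p, q)) : \bar R :=
  if `[< S X >] then 0 else +oo.

Definition conjugate (p q : nat) (f : 'M[R]_(p, q) -> \bar R) (Y : 'M[R]_(p, q)) : \bar R :=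
  ereal_sup (range (fun X => (mxdot Y X)%:E - f X)).

Definition subdiff (p q : nat) (f : 'M[R]_(p, q) -> \bar R) (X : 'M[R]_(p, q)) :
  set 'M[R]_(p, q) :=
  [set G | f X \is a fin_num /\ forall Y, f X + (mxdot G (Y - X))%:E <= f Y].

Definition simplex (m : nat) : set 'cV[R]_m :=
  [set w | (\sum_(i < m) w i 0 = 1)%R /\ forall i, (0 <= w i 0)%R].

Definition nonneg (p q : nat) : set 'M[R]_(p, q) :=
  [set X | forall i j, (0 <= X i j)%R].

Definition delta_simplex (m : nat) := indicator (@simplex m).
Definition delta_plus (p q : nat) := indicator (@nonneg p q).
Definition delta_simplex_conj (m : nat) := conjugate (@delta_simplex m).

Variables (N m : nat) (ms : 'I_N -> nat)
  (D : forall t, 'M[R]_(m, ms t)) (a : forall t, 'cV[R]_(ms t)).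

Definition P_feasible (w : 'cV[R]_m) (Pi : forall t, 'M[R]_(m, ms t)) : Prop :=
  forall t, (Pi t *m ones (ms t) = w)%R /\ ((Pi t)^T *m ones m = a t)%R.

Definition P_obj (w : 'cV[R]_m) (Pi : forall t, 'M[R]_(m, ms t)) : \bar R :=
  delta_simplex w + \sum_(t < N) delta_plus (Pi t)
  + \sum_(t < N) (mxdot (D t) (Pi t))%:E.

Definition P_optimal w Pi : Prop :=
  P_feasible w Pi /\ P_obj w Pi \is a fin_num /\
  forall w' Pi', P_feasible w' Pi' -> P_obj w Pi <= P_obj w' Pi'.

Definition P_KKT (w : 'cV[R]_m) (Pi : forall t, 'M[R]_(m, ms t))
  (y : 'I_N -> 'cV[R]_m) (z : forall t, 'cV[R]_(ms t)) : Prop :=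
  (* 0 \in d delta_Delta(w) - sum_t y_t *)
  subdiff (@delta_simplex m) w (\sum_(t < N) y t)%R /\
  forall t,
    (* 0 \in d delta_+(Pi_t) + D_t + y_t e^T + e z_t^T *)
    subdiff (@delta_plus m (ms t)) (Pi t)
       (- (D t + y t *m (ones (ms t))^T + ones m *m (z t)^T))%R /\
    (Pi t *m ones (ms t) = w)%R /\ ((Pi t)^T *m ones m = a t)%R.

Definition D_feasible (u : 'cV[R]_m) (V : forall t, 'M[R]_(m, ms t))
  (y : 'I_N -> 'cV[R]_m) (z : forall t, 'cV[R]_(ms t)) : Prop :=
  (\sum_(t < N) y t - u = 0)%R /\
  forall t, (V t - D t - y t *m (ones (ms t))^T - ones m *m (z t)^T = 0)%R.

Definition D_obj (u : 'cV[R]_m) (V : forall t, 'M[R]_(m, ms t))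
  (z : forall t, 'cV[R]_(ms t)) : \bar R :=
  delta_simplex_conj u + \sum_(t < N) delta_plus (V t)
  + \sum_(t < N) (mxdot (z t) (a t))%:E.

Definition D_optimal u V y z : Prop :=
  D_feasible u V y z /\ D_obj u V z \is a fin_num /\
  forall u' V' y' z', D_feasible u' V' y' z' -> D_obj u V z <= D_obj u' V' z'.

Definition D_KKT (u : 'cV[R]_m) (V : forall t, 'M[R]_(m, ms t))
  (y : 'I_N -> 'cV[R]_m) (z : forall t, 'cV[R]_(ms t))
  (lam : 'cV[R]_m) (Lam : forall t, 'M[R]_(m, ms t)) : Prop :=
  (* 0 \in d delta*_Delta(u) - lam *)
  subdiff (@delta_simplex_conj m) u lam /\
  (\sum_(t < N) y t - u = 0)%R /\
  forall t,
    (* 0 \in d delta_+(V_t) + Lam_t *)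
    subdiff (@delta_plus m (ms t)) (V t) (- Lam t)%R /\
    (Lam t *m ones (ms t) = lam)%R /\ ((Lam t)^T *m ones m = a t)%R /\
    (V t - D t - y t *m (ones (ms t))^T - ones m *m (z t)^T = 0)%R.

End Defs.

(* Since the conjugate of the simplex indicator is [u |-> max_i u_i], both (P) and (D)
   are linear programs, and (D) is the LP dual of (P): for feasible points
   [<D, Pi> + max_i u_i + <z, a> = sum_t <V_t, Pi_t> + (max_i u_i - <u, w>) >= 0].
   Strong duality comes from Farkas' lemma, proved by Fourier-Motzkin elimination,
   applied to the system "primal feasible, dual feasible, gap <= 0": a certificate
   of infeasibility would contradict weak duality (positive gap multiplier) or the
   existence of feasible points (zero gap multiplier).  A zero-gap pair satisfies
   complementary slackness, which is exactly both KKT systems; conversely the KKT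
   system of (D) forces a zero gap, so both points are optimal by weak duality. *)

From HB Require Import structures.
From mathcomp Require Import all_boot all_order all_algebra.
From mathcomp Require Import boolp classical_sets reals constructive_ereal ereal.
From mathcomp Require Import ring lra.
Set Implicit Arguments. Unset Strict Implicit. Unset Printing Implicit Defensive.
Import Order.TTheory GRing.Theory Num.Theory.
Local Open Scope ring_scope.

Section Farkas.
Variable R : realFieldType.

Lemma sum_eq_natr_mul (T : finType) (i : T) (F : T -> R) :
  \sum_k (k == i)%:R * F k = F i.
Proof.
rewrite (bigD1 i) //= eqxx mul1r big1 ?addr0 // => k /negbTE ->.
by rewrite mul0r.
Qed.

Lemma solvable_one_var (I : finType) (a s : I -> R) :
  (forall i, a i = 0 -> 0 <= s i) ->
  (forall i j, 0 < a i -> a j < 0 -> 0 <= a i * s j - a j * s i) ->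
  exists t, forall i, a i * t <= s i.
Proof.
move=> s_ge0 compat.
pose M := \sum_i `|s i / a i|.
have M_lb i : - M <= s i / a i.
  rewrite lerNl; apply: le_trans (ler_norm _) _.
  by rewrite normrN /M (bigD1 i) //= lerDl; exact: sumr_ge0.
exists (\big[Num.max/ - M]_(j | a j < 0) (s j / a j)) => i.
case: (ltgtP (a i) 0) => [ai_lt0|ai_gt0|ai0]; last by rewrite ai0 mul0r s_ge0.
- have : s i / a i <= \big[Num.max/ - M]_(j | a j < 0) (s j / a j).
    exact: (le_bigmax_cond _ (fun j => s j / a j) ai_lt0).
  by rewrite -(ler_nM2l ai_lt0) mulrCA divff ?mulr1 //; exact: ltr0_neq0.
- have : \big[Num.max/ - M]_(j | a j < 0) (s j / a j) <= s i / a i.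
    apply: bigmax_le => // j aj_lt0.
    rewrite ler_ndivrMr // mulrAC ler_pdivrMr //.
    by have := compat i j ai_gt0 aj_lt0; lra.
  by rewrite -(ler_pM2l ai_gt0) mulrCA divff ?mulr1 //; exact: lt0r_neq0.
Qed.

Variable V : finType.

Definition lin_feasible (I : finType) (A : I -> V -> R) (b : I -> R) :=
  exists x : V -> R, forall i, \sum_v A i v * x v <= b i.

Definition infeasibility_certificate (I : finType) (A : I -> V -> R) (b : I -> R)
    (l : I -> R) :=
  [/\ forall i, 0 <= l i, forall v, \sum_i l i * A i v = 0 & \sum_i l i * b i < 0].

Lemma farkas_zero (I : finType) (A : I -> V -> R) (b : I -> R) :
  (forall i v, A i v = 0) ->
  lin_feasible A b \/ exists l, infeasibility_certificate A b l.
Proof.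
move=> A0; have [/existsP [i bi_lt0]|/existsPn b_ge0] := boolP [exists i, b i < 0].
  right; exists (fun k => (k == i)%:R).
  by split => [k|v|]; rewrite ?sum_eq_natr_mul ?A0 ?ler0n.
left; exists (fun=> 0) => i.
by rewrite big1 => [|v _]; [rewrite leNgt b_ge0 | rewrite mulr0].
Qed.

Section Elimination.
Variables (I : finType) (A : I -> V -> R) (b : I -> R) (v : V).
Local Notation a := (A^~ v).

(* Fourier-Motzkin: the rows of the system without [v] are indexed by pairs [(i, j)];
   [(i, i)] keeps a row with [a i = 0], [(i, j)] with [a i > 0 > a j] combines
   rows [i] and [j] so that [v] cancels, and every other pair is the trivial row. *)
Definition fm_comb (p : I * I) (k : I) : R :=
  if (p.1 == p.2) && (a p.1 == 0) then (k == p.1)%:R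
  else if (0 < a p.1) && (a p.2 < 0) then
    - a p.2 * (k == p.1)%:R + a p.1 * (k == p.2)%:R
  else 0.

Definition fm_A (p : I * I) (u : V) := \sum_k fm_comb p k * A k u.
Definition fm_b (p : I * I) := \sum_k fm_comb p k * b k.

Lemma fm_comb_ge0 p k : 0 <= fm_comb p k.
Proof.
rewrite /fm_comb; case: ifP => _; first exact: ler0n.
case: ifP => // /andP [ai_gt0 aj_lt0].
by apply: addr_ge0; apply: mulr_ge0; rewrite ?ler0n ?oppr_ge0 ?ltW.
Qed.

Lemma sum_fm_comb_zero i F : a i = 0 -> \sum_k fm_comb (i, i) k * F k = F i.
Proof. by move=> ai0; rewrite /fm_comb /= eqxx ai0 eqxx /= sum_eq_natr_mul. Qed.

Lemma sum_fm_comb_pair i j F : 0 < a i -> a j < 0 ->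
  \sum_k fm_comb (i, j) k * F k = - a j * F i + a i * F j.
Proof.
move=> ai_gt0 aj_lt0; rewrite /fm_comb /= (gt_eqF ai_gt0) andbF ai_gt0 aj_lt0 /=.
under eq_bigr do rewrite mulrDl -!mulrA.
by rewrite big_split /= -!mulr_sumr !sum_eq_natr_mul.
Qed.

Lemma fm_A_eliminated p : fm_A p v = 0.
Proof.
case: p => i j; rewrite /fm_A.
have [/andP [/eqP <- /eqP ai0]|not_same] := boolP ((i == j) && (a i == 0)).
  by rewrite sum_fm_comb_zero.
have [/andP [ai_gt0 aj_lt0]|not_pair] := boolP ((0 < a i) && (a j < 0)).
  by rewrite sum_fm_comb_pair //; ring.
by rewrite big1 // => k _; rewrite /fm_comb /= (negbTE not_same) (negbTE not_pair) mul0r.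
Qed.

Lemma fm_certificate l : infeasibility_certificate fm_A fm_b l ->
  infeasibility_certificate A b (fun k => \sum_p l p * fm_comb p k).
Proof.
move=> [l_ge0 l_A l_b].
have lift F : \sum_k (\sum_p l p * fm_comb p k) * F k
            = \sum_p l p * \sum_k fm_comb p k * F k.
  under eq_bigr do rewrite mulr_suml.
  rewrite exchange_big; apply: eq_bigr => p _; rewrite mulr_sumr.
  by apply: eq_bigr => k _; rewrite mulrA.
split => [k|u|]; rewrite ?lift; [|exact: l_A|exact: l_b].
by apply: sumr_ge0 => p _; apply: mulr_ge0; [exact: l_ge0 | exact: fm_comb_ge0].
Qed.

(* A solution of the eliminated system leaves, for [v], one-variable constraints
   that are pairwise compatible. *)
Lemma fm_feasible : lin_feasible fm_A fm_b -> lin_feasible A b.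
Proof.
move=> [x x_sol].
pose r k := \sum_(u | u != v) A k u * x u.
have r_combE p : \sum_k fm_comb p k * r k = \sum_u fm_A p u * x u.
  rewrite [RHS](bigD1 v) //= fm_A_eliminated mul0r add0r.
  under eq_bigr do rewrite mulr_sumr.
  rewrite exchange_big /=; apply: eq_bigr => u _.
  by rewrite /fm_A mulr_suml; apply: eq_bigr => k _; rewrite mulrA.
have [t t_sol] : exists t, forall k, a k * t <= b k - r k.
  apply: solvable_one_var => [i ai0|i j ai_gt0 aj_lt0].
    by have := x_sol (i, i); rewrite -r_combE /fm_b !sum_fm_comb_zero // subr_ge0.
  by have := x_sol (i, j); rewrite -r_combE /fm_b !sum_fm_comb_pair //; lra.
exists (fun u => if u == v then t else x u) => k.
rewrite (bigD1 v) //= eqxx (eq_bigr (fun u => A k u * x u)) => [|u /negbTE -> //].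
by have := t_sol k; rewrite -/(r k); lra.
Qed.

End Elimination.

Lemma farkas_support (n : nat) (S : {set V}) (I : finType) (A : I -> V -> R) (b : I -> R) :
  (#|S| <= n)%N -> (forall i v, v \notin S -> A i v = 0) ->
  lin_feasible A b \/ exists l, infeasibility_certificate A b l.
Proof.
elim: n S I A b => [|n IHn] S I A b S_le A_out.
  apply: farkas_zero => i v; apply: A_out.
  by move: S_le; rewrite leqn0 cards_eq0 => /eqP ->; rewrite inE.
have [S0|[v vS]] := set_0Vmem S.
  by apply: farkas_zero => i u; apply: A_out; rewrite S0 inE.
have A'_out p u : u \notin S :\ v -> fm_A A v p u = 0.
  rewrite !inE negb_and negbK => /orP [/eqP -> |uS]; first exact: fm_A_eliminated.
  by rewrite /fm_A big1 // => k _; rewrite A_out // mulr0.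
have S'_le : (#|S :\ v| <= n)%N by move: S_le; rewrite (cardsD1 v S) vS.
have [feasible|[l certificate]] := IHn _ _ _ (fm_b A b v) S'_le A'_out.
  by left; exact: fm_feasible feasible.
by right; eexists; exact: fm_certificate certificate.
Qed.

Theorem farkas (I : finType) (A : I -> V -> R) (b : I -> R) :
  lin_feasible A b \/ exists l, infeasibility_certificate A b l.
Proof. by apply: (@farkas_support #|[set: V]| [set: V]) => // i v; rewrite inE. Qed.

End Farkas.

Section LinearForms.
Variables (R : realFieldType) (V : finType).

Definition linear_form (f : (V -> R) -> R) :=
  forall x y k, f (fun v => k * x v + y v) = k * f x + f y.

Lemma linear_form_eval v : linear_form (fun x => x v).
Proof. by []. Qed.

Lemma linear_formD f g : linear_form f -> linear_form g -> linear_form (fun x => f x + g x).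
Proof. by move=> lf lg x y k; rewrite lf lg; ring. Qed.

Lemma linear_formN f : linear_form f -> linear_form (fun x => - f x).
Proof. by move=> lf x y k; rewrite lf; ring. Qed.

Lemma linear_formZ c f : linear_form f -> linear_form (fun x => c * f x).
Proof. by move=> lf x y k; rewrite lf; ring. Qed.

Lemma linear_form_sum (T : finType) (F : T -> (V -> R) -> R) :
  (forall j, linear_form (F j)) -> linear_form (fun x => \sum_j F j x).
Proof.
move=> lF x y k; rewrite (eq_bigr _ (fun j _ => lF j x y k)) big_split /=.
by rewrite mulr_sumr.
Qed.

Lemma linear_form0 f : linear_form f -> f (fun=> 0) = 0.
Proof.
move=> lf; have := lf (fun=> 0) (fun=> 0) 1.
rewrite (_ : (fun _ => 1 * 0 + 0) = fun=> 0); last by apply: funext => v; rewrite mulr0 addr0.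
by rewrite mul1r => h; lra.
Qed.

Lemma linear_form_coordE f : linear_form f ->
  forall x, f x = \sum_v f (fun u => (u == v)%:R) * x v.
Proof.
move=> lf x.
have x_basis : x = fun u => \sum_(v <- index_enum V) x v * (u == v)%:R.
  apply: funext => u; rewrite (bigD1 u) //= eqxx mulr1.
  by rewrite big1 ?addr0 // => v /negbTE; rewrite eq_sym => ->; rewrite mulr0.
rewrite [in LHS]x_basis; elim: (index_enum V) => [|v s IHs].
  rewrite big_nil -[RHS](linear_form0 lf); apply: congr1.
  by apply: funext => u; rewrite big_nil.
rewrite big_cons -IHs mulrC -lf; apply: congr1.
by apply: funext => u; rewrite big_cons.
Qed.

Theorem farkas_linear_forms (I : finType) (f : I -> (V -> R) -> R) (b : I -> R) :
  (forall i, linear_form (f i)) ->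
  (exists x, forall i, f i x <= b i) \/
  exists l, [/\ forall i, 0 <= l i, forall x, \sum_i l i * f i x = 0
              & \sum_i l i * b i < 0].
Proof.
move=> lf; have [[x x_sol]|[l [l_ge0 l_A l_b]]] :=
  farkas (fun i v => f i (fun u => (u == v)%:R)) b.
  by left; exists x => i; rewrite linear_form_coordE.
right; exists l; split => // x.
under eq_bigr do rewrite linear_form_coordE // mulr_sumr.
rewrite exchange_big big1 // => v _.
by under eq_bigr do rewrite mulrA; rewrite -mulr_suml l_A mul0r.
Qed.

Lemma certificate_ge0 (I : finType) (f : I -> (V -> R) -> R) (b l : I -> R) x :
  (forall x, \sum_i l i * f i x = 0) -> (forall i, l i * f i x <= l i * b i) ->
  0 <= \sum_i l i * b i.
Proof. by move=> l_f x_sol; rewrite -[leLHS](l_f x); apply: ler_sum => i _. Qed.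

End LinearForms.

Section CombinedSystem.
Local Unset Implicit Arguments.
Variables (R : realFieldType) (N m : nat) (ms : 'I_N -> nat)
  (D : forall t, 'M[R]_(m, ms t)) (a : forall t, 'cV[R]_(ms t)).

(* Unknowns [w, Pi, y, z, theta], where theta bounds every entry of [u = sum_t y_t]
   (so it stands for the support function of the simplex at u).  The constraints
   are primal feasibility, dual feasibility and a nonpositive duality gap. *)
Local Notation PiI := {t : 'I_N & ('I_m * 'I_(ms t))%type}.
Local Notation ZI := {t : 'I_N & 'I_(ms t)}.
Local Notation Var := (((('I_m + PiI) + ('I_N * 'I_m)) + ZI) + unit)%type.
Local Notation Con :=
  ((((PiI + (bool * ('I_N * 'I_m))) + (bool * ZI)) + 'I_m) + PiI + unit)%type.

Definition pidx t i j : PiI := existT (fun t => ('I_m * 'I_(ms t))%type) t (i, j).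
Definition zidx t j : ZI := existT (fun t => 'I_(ms t)) t j.

Definition xw (x : Var -> R) i := x (inl (inl (inl (inl i)))).
Definition xP (x : Var -> R) t i j := x (inl (inl (inl (inr (pidx t i j))))).
Definition xy (x : Var -> R) t i := x (inl (inl (inr (t, i)))).
Definition xz (x : Var -> R) t j := x (inl (inr (zidx t j))).
Definition xth (x : Var -> R) := x (inr tt).

Definition con_Pi t i j : Con := inl (inl (inl (inl (inl (pidx t i j))))).
Definition con_row s t i : Con := inl (inl (inl (inl (inr (s, (t, i)))))).
Definition con_col s t j : Con := inl (inl (inl (inr (s, zidx t j)))).
Definition con_u i : Con := inl (inl (inr i)).
Definition con_V t i j : Con := inl (inr (pidx t i j)).
Definition con_gap : Con := inr tt.

Definition sgn (s : bool) : R := if s then 1 else -1.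

Definition gap (x : Var -> R) : R :=
  \sum_t \sum_i \sum_j D t i j * xP x t i j + xth x + \sum_t \sum_j a t j 0 * xz x t j.

Definition sys_lhs (c : Con) (x : Var -> R) : R :=
  match c with
  | inl (inl (inl (inl (inl p)))) => - xP x (tag p) (tagged p).1 (tagged p).2
  | inl (inl (inl (inl (inr q)))) => sgn q.1 * (\sum_j xP x q.2.1 q.2.2 j - xw x q.2.2)
  | inl (inl (inl (inr q))) => sgn q.1 * \sum_i xP x (tag q.2) i (tagged q.2)
  | inl (inl (inr i)) => \sum_t xy x t i - xth x
  | inl (inr p) => - xy x (tag p) (tagged p).1 - xz x (tag p) (tagged p).2
  | inr _ => gap x
  end.

Definition sys_rhs (c : Con) : R :=
  match c with
  | inl (inl (inl (inr q))) => sgn q.1 * a (tag q.2) (tagged q.2) 0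
  | inl (inr p) => D (tag p) (tagged p).1 (tagged p).2
  | _ => 0
  end.

Lemma linear_sys_lhs c : linear_form (sys_lhs c).
Proof.
case: c => [[[[[p|q]|q]|i]|p]|[]] /=; rewrite ?/gap;
  repeat first [ apply: linear_formD | apply: linear_formN | apply: linear_formZ
               | apply: linear_form_sum => ? | exact: linear_form_eval ].
Qed.

Lemma sum_pair (X Y : finType) (G : X * Y -> R) : \sum_q G q = \sum_x \sum_y G (x, y).
Proof. by rewrite pair_bigA; apply: eq_bigr => -[]. Qed.

Lemma sum_sign (X : finType) (G : bool * X -> R) :
  \sum_q G q = \sum_x (G (true, x) + G (false, x)).
Proof. by rewrite sum_pair big_bool /= big_split /= addrC. Qed.

Lemma sum_PiI (G : PiI -> R) : \sum_p G p = \sum_t \sum_i \sum_j G (pidx t i j).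
Proof.
transitivity (\sum_t \sum_(q : ('I_m * 'I_(ms t))%type) G (existT _ t q)).
  rewrite (sig_big_dep xpredT (fun=> xpredT)
    (fun t (q : ('I_m * 'I_(ms t))%type) => G (existT _ t q))) /=.
  by apply: eq_bigr => -[].
by apply: eq_bigr => t _; rewrite pair_bigA /=; apply: eq_bigr => -[].
Qed.

Lemma sum_ZI (G : ZI -> R) : \sum_q G q = \sum_t \sum_j G (zidx t j).
Proof.
rewrite (sig_big_dep xpredT (fun=> xpredT) (fun t (j : 'I_(ms t)) => G (existT _ t j))).
by apply: eq_bigr => -[].
Qed.

Lemma sum_Con (F : Con -> R) : \sum_c F c =
  \sum_t \sum_i \sum_j F (con_Pi t i j)
  + \sum_t \sum_i (F (con_row true t i) + F (con_row false t i))
  + \sum_t \sum_j (F (con_col true t j) + F (con_col false t j))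
  + \sum_i F (con_u i)
  + \sum_t \sum_i \sum_j F (con_V t i j)
  + F con_gap.
Proof.
have sum_unit (G : unit -> R) : \sum_k G k = G tt.
  by rewrite (bigD1 tt) //= big_pred0 ?addr0 // => -[].
by rewrite !big_sumType /= sum_unit !sum_PiI !sum_sign sum_pair sum_ZI.
Qed.

Section Certificate.
Variable l : Con -> R.
Hypotheses (l_ge0 : forall c, 0 <= l c) (l_lhs : forall x, \sum_c l c * sys_lhs c x = 0).

Definition mult_row t i := l (con_row true t i) - l (con_row false t i).
Definition mult_col t j := l (con_col true t j) - l (con_col false t j).

Lemma sum_mult_lhs x : \sum_c l c * sys_lhs c x =
  \sum_t \sum_i \sum_j l (con_Pi t i j) * - xP x t i j
  + \sum_t \sum_i mult_row t i * (\sum_j xP x t i j - xw x i)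
  + \sum_t \sum_j mult_col t j * \sum_i xP x t i j
  + \sum_i l (con_u i) * (\sum_t xy x t i - xth x)
  + \sum_t \sum_i \sum_j l (con_V t i j) * (- xy x t i - xz x t j)
  + l con_gap * gap x.
Proof.
rewrite sum_Con; congr (_ + _ + _ + _ + _ + _).
- by apply: eq_bigr => t _; apply: eq_bigr => i _; rewrite /mult_row /= /sgn; ring.
- by apply: eq_bigr => t _; apply: eq_bigr => j _; rewrite /mult_col /= /sgn; ring.
Qed.

Lemma sum_mult_rhs : \sum_c l c * sys_rhs c =
  \sum_t \sum_j a t j 0 * mult_col t j + \sum_t \sum_i \sum_j D t i j * l (con_V t i j).
Proof.
rewrite sum_Con /= mulr0 addr0.
rewrite [X in X + _ + _ + _ + _]big1 => [|t _]; last first.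
  by rewrite big1 // => i _; rewrite big1 // => j _; rewrite mulr0.
rewrite [X in _ + X + _ + _ + _]big1 => [|t _]; last first.
  by rewrite big1 // => i _; rewrite !mulr0 addr0.
rewrite [X in _ + _ + _ + X + _]big1 => [|i _]; last by rewrite mulr0.
rewrite addr0 !add0r; congr (_ + _).
  by apply: eq_bigr => t _; apply: eq_bigr => j _; rewrite /mult_col /sgn; ring.
by do 3 (apply: eq_bigr => ? _); rewrite mulrC.
Qed.

(* With a positive gap multiplier, the multipliers themselves give a point at which
   the certified identity reduces to [l_gap * sum_c l c * rhs c = sum l_Pi * l_V]. *)
Lemma certificate_gap_pos : 0 < l con_gap -> 0 <= \sum_c l c * sys_rhs c.
Proof.
move=> gap_gt0.
pose X (v : Var) : R := match v with
  | inl (inl (inl (inl i))) => l (con_u i)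
  | inl (inl (inl (inr p))) => l (con_V (tag p) (tagged p).1 (tagged p).2)
  | inl (inl (inr q)) => mult_row q.1 q.2
  | inl (inr q) => mult_col (tag q) (tagged q)
  | inr _ => 0
  end.
pose nu t i j := l (con_V t i j).
have rows : \sum_t \sum_i mult_row t i * (\sum_j xP X t i j - xw X i)
    + \sum_i l (con_u i) * (\sum_t xy X t i - xth X)
  = \sum_t \sum_i \sum_j mult_row t i * nu t i j.
  under [X in _ + X]eq_bigr do rewrite /xth /= subr0 mulr_sumr.
  rewrite [X in _ + X]exchange_big -big_split /=; apply: eq_bigr => t _.
  rewrite -big_split /=; apply: eq_bigr => i _.
  by rewrite -mulr_sumr /xw /xy /xP /nu /=; ring.
have cols : \sum_t \sum_j mult_col t j * \sum_i xP X t i j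
  = \sum_t \sum_i \sum_j mult_col t j * nu t i j.
  apply: eq_bigr => t _; rewrite exchange_big /=; apply: eq_bigr => j _.
  by rewrite mulr_sumr.
have pis : \sum_t \sum_i \sum_j l (con_Pi t i j) * - xP X t i j
  = - \sum_t \sum_i \sum_j l (con_Pi t i j) * nu t i j.
  rewrite -sumrN; apply: eq_bigr => t _; rewrite -sumrN; apply: eq_bigr => i _.
  by rewrite -sumrN; apply: eq_bigr => j _; rewrite mulrN.
have pis_ge0 : 0 <= \sum_t \sum_i \sum_j l (con_Pi t i j) * nu t i j.
  by do 3 (apply: sumr_ge0 => ? _); apply: mulr_ge0; apply: l_ge0.
have vs : \sum_t \sum_i \sum_j l (con_V t i j) * (- xy X t i - xz X t j)
  = - (\sum_t \sum_i \sum_j mult_row t i * nu t i j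
       + \sum_t \sum_i \sum_j mult_col t j * nu t i j).
  rewrite -big_split -sumrN; apply: eq_bigr => t _; rewrite -big_split -sumrN.
  apply: eq_bigr => i _; rewrite -big_split -sumrN; apply: eq_bigr => j _.
  by rewrite /xy /xz /nu /=; ring.
have := l_lhs X; rewrite -(pmulr_rge0 _ gap_gt0) sum_mult_rhs sum_mult_lhs.
move: rows cols pis vs pis_ge0; rewrite /gap /xP /xz /xth /nu /=.
lra.
Qed.

Lemma certificate_gap0 : (0 < m)%N -> (forall t j, 0 <= a t j 0) ->
  (forall t, \sum_j a t j 0 = 1) -> l con_gap = 0 -> 0 <= \sum_c l c * sys_rhs c.
Proof.
move=> m_gt0 a_ge0 a_sum1 gap0.
pose i0 : 'I_m := Ordinal m_gt0.
(* A primal feasible point with [y = 0] and a large [z] violates only the gap row. *)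
pose M := \sum_(p : PiI) `|D (tag p) (tagged p).1 (tagged p).2|.
pose X (v : Var) : R := match v with
  | inl (inl (inl (inl i))) => (i == i0)%:R
  | inl (inl (inl (inr p))) => ((tagged p).1 == i0)%:R * a (tag p) (tagged p).2 0
  | inl (inl (inr _)) => 0
  | inl (inr _) => M
  | inr _ => 0
  end.
apply: (certificate_ge0 (x := X) l_lhs) => c.
case: c => [[[[[p|[s q]]|[s q]]|i]|p]|[]]; last by rewrite [l _]gap0 !mul0r.
all: apply: ler_wpM2l; [exact: l_ge0|rewrite /= /xP /xw /xy /xz /xth /=].
- by rewrite oppr_le0 mulr_ge0 ?ler0n ?a_ge0.
- by rewrite -mulr_sumr a_sum1 mulr1 subrr mulr0.
- by rewrite sum_eq_natr_mul.
- by rewrite big1 // subrr.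
- rewrite oppr0 sub0r lerNl; apply: le_trans (ler_norm _) _.
  by rewrite normrN /M (bigD1 p) //= lerDl; apply: sumr_ge0.
Qed.

End Certificate.

Lemma combined_system_solvable : (0 < m)%N -> (forall t j, 0 <= a t j 0) ->
  (forall t, \sum_j a t j 0 = 1) -> exists x, forall c, sys_lhs c x <= sys_rhs c.
Proof.
move=> m_gt0 a_ge0 a_sum1.
have [//|[l [l_ge0 l_lhs l_rhs]]] := farkas_linear_forms sys_rhs linear_sys_lhs.
suff : 0 <= \sum_c l c * sys_rhs c by rewrite leNgt l_rhs.
have [gap_gt0|gap0] := ltrP 0 (l con_gap).
  exact: certificate_gap_pos.
have {}gap0 : l con_gap = 0 by apply/eqP; rewrite eq_le gap0 l_ge0.
exact: certificate_gap0.
Qed.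

Theorem combined_system_solution : (0 < m)%N -> (forall t j, 0 <= a t j 0) ->
  (forall t, \sum_j a t j 0 = 1) ->
  exists (w : 'I_m -> R) (P : forall t, 'I_m -> 'I_(ms t) -> R)
    (y : 'I_N -> 'I_m -> R) (z : forall t, 'I_(ms t) -> R) (theta : R),
  [/\ forall t i j, 0 <= P t i j,
      forall t i, \sum_j P t i j = w i
    & forall t j, \sum_i P t i j = a t j 0] /\
  [/\ forall i, \sum_t y t i <= theta,
      forall t i j, 0 <= D t i j + y t i + z t j
    & \sum_t \sum_i \sum_j D t i j * P t i j + theta
      + \sum_t \sum_j a t j 0 * z t j <= 0].
Proof.
move=> m_gt0 a_ge0 a_sum1.
have [x x_sol] := combined_system_solvable m_gt0 a_ge0 a_sum1.
exists (xw x), (xP x), (xy x), (xz x), (xth x); split; split.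
- by move=> t i j; have := x_sol (con_Pi t i j); rewrite /= oppr_le0.
- move=> t i; have := x_sol (con_row true t i); have := x_sol (con_row false t i).
  by rewrite /= /sgn; lra.
- move=> t j; have := x_sol (con_col true t j); have := x_sol (con_col false t j).
  by rewrite /= /sgn; lra.
- by move=> i; have := x_sol (con_u i); rewrite /=; lra.
- by move=> t i j; have := x_sol (con_V t i j); rewrite /=; lra.
- exact: x_sol con_gap.
Qed.

End CombinedSystem.

Section Frobenius.
Variable R : realType.

Lemma mxdotC p q (X Y : 'M[R]_(p, q)) : mxdot X Y = mxdot Y X.
Proof. by apply: eq_bigr => i _; apply: eq_bigr => j _; rewrite mulrC. Qed.

Lemma mxdotDl p q (X Y Z : 'M[R]_(p, q)) : mxdot (X + Y) Z = mxdot X Z + mxdot Y Z.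
Proof.
rewrite /mxdot -big_split; apply: eq_bigr => i _; rewrite -big_split.
by apply: eq_bigr => j _; rewrite mxE mulrDl.
Qed.

Lemma mxdotNl p q (X Z : 'M[R]_(p, q)) : mxdot (- X) Z = - mxdot X Z.
Proof.
rewrite /mxdot -sumrN; apply: eq_bigr => i _; rewrite -sumrN.
by apply: eq_bigr => j _; rewrite mxE mulNr.
Qed.

Lemma mxdotBl p q (X Y Z : 'M[R]_(p, q)) : mxdot (X - Y) Z = mxdot X Z - mxdot Y Z.
Proof. by rewrite mxdotDl mxdotNl. Qed.

Lemma mxdotBr p q (X Y Z : 'M[R]_(p, q)) : mxdot Z (X - Y) = mxdot Z X - mxdot Z Y.
Proof. by rewrite !(mxdotC Z) mxdotBl. Qed.

Lemma mxdot0r p q (X : 'M[R]_(p, q)) : mxdot X 0 = 0.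
Proof. by rewrite /mxdot big1 // => i _; rewrite big1 // => j _; rewrite mxE mulr0. Qed.

Lemma mxdot_suml (I : finType) p q (F : I -> 'M[R]_(p, q)) X :
  mxdot (\sum_t F t) X = \sum_t mxdot (F t) X.
Proof.
rewrite /mxdot; under eq_bigr do under eq_bigr do rewrite summxE mulr_suml.
by under eq_bigr do rewrite exchange_big /=; rewrite exchange_big.
Qed.

Lemma mxdot_ge0 p q (X Y : 'M[R]_(p, q)) : nonneg X -> nonneg Y -> 0 <= mxdot X Y.
Proof. by move=> X_ge0 Y_ge0; do 2 (apply: sumr_ge0 => ? _); apply: mulr_ge0. Qed.

Lemma mxdot_delta p q (X : 'M[R]_(p, q)) i j : mxdot X (delta_mx i j) = X i j.
Proof.
rewrite /mxdot (bigD1 i) //= (bigD1 j) //= mxE !eqxx mulr1.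
rewrite big1 ?addr0 => [|j' /negbTE j'j]; last by rewrite mxE eqxx j'j mulr0.
rewrite big1 ?addr0 // => i' /negbTE i'i; rewrite big1 // => j' _.
by rewrite mxE i'i mulr0.
Qed.

Lemma mxdot_colE p (u w : 'cV[R]_p) : mxdot u w = \sum_i u i 0 * w i 0.
Proof. by apply: eq_bigr => i _; rewrite big_ord1. Qed.

Lemma mxdot_const p (u : 'cV[R]_p) c : mxdot u (const_mx c) = c * \sum_i u i 0.
Proof. by rewrite mxdot_colE mulr_sumr; apply: eq_bigr => i _; rewrite mxE mulrC. Qed.

Lemma mul_onesE p k (X : 'M[R]_(p, k)) i : (X *m ones R k) i 0 = \sum_j X i j.
Proof. by rewrite mxE; apply: eq_bigr => j _; rewrite mxE mulr1. Qed.

Lemma tr_mul_onesE p k (X : 'M[R]_(p, k)) j : (X^T *m ones R p) j 0 = \sum_i X i j.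
Proof. by rewrite mxE; apply: eq_bigr => i _; rewrite !mxE mulr1. Qed.

Lemma dual_slackE p k (V D : 'M[R]_(p, k)) (y : 'cV[R]_p) (z : 'cV[R]_k) :
  V - D - y *m (ones R k)^T - ones R p *m z^T = 0 <->
  V = D + y *m (ones R k)^T + ones R p *m z^T.
Proof.
rewrite -!addrA -!opprD !addrA.
split=> [/eqP|->]; last exact: subrr.
by rewrite subr_eq0 => /eqP.
Qed.

Lemma dual_slack_entryE p k (D : 'M[R]_(p, k)) (y : 'cV[R]_p) (z : 'cV[R]_k) i j :
  (D + y *m (ones R k)^T + ones R p *m z^T) i j = D i j + y i 0 + z j 0.
Proof. by rewrite !mxE !big_ord1 !mxE mulr1 mul1r. Qed.

Lemma mxdot_marginals p k (V D Pi : 'M[R]_(p, k)) (y : 'cV[R]_p) (z : 'cV[R]_k) :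
  V - D - y *m (ones R k)^T - ones R p *m z^T = 0 ->
  mxdot D Pi = mxdot V Pi - mxdot y (Pi *m ones R k) - mxdot z (Pi^T *m ones R p).
Proof.
move=> /dual_slackE ->; rewrite !mxdot_colE.
under [X in _ - X - _]eq_bigr do rewrite mul_onesE mulr_sumr.
under [X in _ - X]eq_bigr do rewrite tr_mul_onesE mulr_sumr.
rewrite [X in _ - X]exchange_big /mxdot -!sumrB; apply: eq_bigr => i _.
rewrite -!sumrB; apply: eq_bigr => j _.
by rewrite dual_slack_entryE; ring.
Qed.

End Frobenius.

Section Subdifferentials.
Variable R : realType.

Lemma indicatorT p q (S : set 'M[R]_(p, q)) X : S X -> indicator S X = 0%E.
Proof. by move=> SX; rewrite /indicator asboolT. Qed.

Lemma indicatorF p q (S : set 'M[R]_(p, q)) X : ~ S X -> indicator S X = +oo%E.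
Proof. by move=> SX; rewrite /indicator asboolF. Qed.

Lemma indicator_ge0 p q (S : set 'M[R]_(p, q)) X : (0 <= indicator S X)%E.
Proof. by rewrite /indicator; case: asboolP. Qed.

Lemma subdiff_delta_plusP p q (V L : 'M[R]_(p, q)) :
  subdiff (@delta_plus R p q) V (- L) <-> [/\ nonneg V, nonneg L & mxdot V L = 0].
Proof.
split=> [[V_fin sub]|[V_ge0 L_ge0 VL0]].
  have V_ge0 : nonneg V.
    by apply: contrapT => V_out; move: V_fin; rewrite /delta_plus indicatorF.
  have L_ge0 : nonneg L.
    move=> i j; have Vij_ge0 : nonneg (V + delta_mx i j).
      by move=> i' j'; rewrite !mxE addr_ge0 ?ler0n.
    have := sub (V + delta_mx i j).
    rewrite /delta_plus !indicatorT // add0e lee_fin.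
    by rewrite addrC addKr mxdotNl mxdot_delta oppr_le0.
  split=> //; have := sub 0; rewrite /delta_plus !indicatorT // => [|i j]; last by rewrite mxE.
  rewrite add0e lee_fin mxdotNl mxdotBr mxdot0r sub0r opprK mxdotC => LV_le0.
  by apply/eqP; rewrite eq_le LV_le0 mxdot_ge0.
split=> [|Y]; first by rewrite /delta_plus indicatorT.
rewrite /delta_plus indicatorT // add0e.
have [Y_ge0|Y_out] := pselect (nonneg Y); last by rewrite indicatorF // leey.
rewrite indicatorT // lee_fin mxdotNl mxdotBr (mxdotC L V) VL0 subr0 oppr_le0.
exact: mxdot_ge0.
Qed.

Variable m : nat.

Lemma mxdot_le_simplex (u X : 'cV[R]_m) c :
  (forall i, u i 0 <= c) -> simplex X -> mxdot u X <= c.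
Proof.
move=> u_le [X_sum1 X_ge0]; rewrite mxdot_colE.
apply: (@le_trans _ _ (\sum_i c * X i 0)); first by apply: ler_sum => i _; apply: ler_wpM2r.
by rewrite -mulr_sumr X_sum1 mulr1.
Qed.

Lemma simplex_delta (i : 'I_m) : simplex (delta_mx i 0 : 'cV[R]_m).
Proof.
split=> [|k]; last by rewrite mxE ler0n.
rewrite (bigD1 i) //= mxE !eqxx big1 ?addr0 // => k /negbTE ki.
by rewrite mxE ki.
Qed.

Lemma delta_simplex_conj_ge (u X : 'cV[R]_m) :
  simplex X -> ((mxdot u X)%:E <= delta_simplex_conj u)%E.
Proof.
move=> X_simplex; apply: ereal_sup_ubound; exists X => //.
by rewrite /delta_simplex indicatorT // sube0.
Qed.

Lemma delta_simplex_conj_le (u : 'cV[R]_m) c :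
  (forall X, simplex X -> mxdot u X <= c) -> (delta_simplex_conj u <= c%:E)%E.
Proof.
move=> dot_le; apply: ge_ereal_sup => _ [X _ <-].
have [X_simplex|X_out] := pselect (simplex X).
  by rewrite /delta_simplex indicatorT // sube0 lee_fin dot_le.
by rewrite /delta_simplex indicatorF //= addeNy leNye.
Qed.

Definition simplex_support (u : 'cV[R]_m) : R := fine (delta_simplex_conj u).

Hypothesis m_gt0 : (0 < m)%N.

Lemma delta_simplex_conjE u : delta_simplex_conj u = (simplex_support u)%:E.
Proof.
have := delta_simplex_conj_ge u (simplex_delta (Ordinal m_gt0)).
have : (delta_simplex_conj u <= (\sum_i `|u i 0|)%:E)%E.
  apply: delta_simplex_conj_le => X; apply: mxdot_le_simplex => i.
  apply: le_trans (ler_norm _) _.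
  by rewrite (bigD1 i) //= lerDl; apply: sumr_ge0.
by rewrite /simplex_support; case: (delta_simplex_conj u).
Qed.

Lemma simplex_support_ge u X : simplex X -> mxdot u X <= simplex_support u.
Proof. by move=> X_simplex; rewrite -lee_fin -delta_simplex_conjE delta_simplex_conj_ge. Qed.

Lemma simplex_support_le u c :
  (forall X, simplex X -> mxdot u X <= c) -> simplex_support u <= c.
Proof. by move=> dot_le; rewrite -lee_fin -delta_simplex_conjE delta_simplex_conj_le. Qed.

Lemma subdiff_delta_simplex_conjP (u lam : 'cV[R]_m) :
  subdiff (@delta_simplex_conj R m) u lam <->
  simplex lam /\ mxdot u lam = simplex_support u.
Proof.
split=> [[_ sub]|[lam_simplex u_lam]].
  have {}sub Y : simplex_support u + mxdot lam (Y - u) <= simplex_support Y.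
    by have := sub Y; rewrite !delta_simplex_conjE lee_fin.
  have lam_sum1 : \sum_i lam i 0 = 1.
    have shift c : c * \sum_i lam i 0 <= c.
      have := sub (u + const_mx c); rewrite [u + _ - u]addrC addKr mxdot_const.
      suff : simplex_support (u + const_mx c) <= simplex_support u + c by lra.
      apply: simplex_support_le => X X_simplex.
      rewrite mxdotDl (mxdotC (const_mx c)) mxdot_const X_simplex.1 mulr1 lerD2r.
      exact: simplex_support_ge.
    by have := shift 1; have := shift (-1); lra.
  have lam_ge0 i : 0 <= lam i 0.
    have := sub (u - delta_mx i 0).
    rewrite [u - _ - u]addrC addKr mxdotC mxdotNl mxdotC mxdot_delta.
    suff : simplex_support (u - delta_mx i 0) <= simplex_support u by lra.
    apply: simplex_support_le => X X_simplex.
    rewrite mxdotBl (mxdotC (delta_mx i 0)) mxdot_delta.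
    by have := simplex_support_ge u X_simplex; have := X_simplex.2 i; lra.
  have lam_simplex : simplex lam by [].
  split=> //; apply/eqP; rewrite eq_le simplex_support_ge //=.
  have := sub 0; rewrite mxdotBr mxdot0r sub0r mxdotC.
  suff : simplex_support 0 <= 0 by lra.
  by apply: simplex_support_le => X _; rewrite mxdotC mxdot0r.
split=> [|Y]; first by rewrite delta_simplex_conjE.
rewrite !delta_simplex_conjE lee_fin mxdotBr (mxdotC lam u) u_lam.
by have := simplex_support_ge Y lam_simplex; rewrite mxdotC; lra.
Qed.

Lemma subdiff_delta_simplex (w u : 'cV[R]_m) :
  simplex w -> mxdot u w = simplex_support u -> subdiff (@delta_simplex R m) w u.
Proof.
move=> w_simplex u_w; split=> [|Y]; first by rewrite /delta_simplex indicatorT.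
rewrite /delta_simplex indicatorT // add0e.
have [Y_simplex|Y_out] := pselect (simplex Y); last by rewrite indicatorF // leey.
rewrite indicatorT // lee_fin mxdotBr u_w subr_le0.
exact: simplex_support_ge.
Qed.

End Subdifferentials.

Section Duality.
Variables (R : realType) (N m : nat) (ms : 'I_N -> nat)
  (D : forall t, 'M[R]_(m, ms t)) (a : forall t, 'cV[R]_(ms t)).

Definition duality_gap (u : 'cV[R]_m) (z : forall t, 'cV[R]_(ms t))
    (Pi : forall t, 'M[R]_(m, ms t)) :=
  \sum_t mxdot (D t) (Pi t) + simplex_support u + \sum_t mxdot (z t) (a t).

Lemma sum_delta_plus_oo (Pi : forall t, 'M[R]_(m, ms t)) :
  ~ (forall t, nonneg (Pi t)) -> (\sum_t delta_plus (Pi t) = +oo)%E.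
Proof.
move=> /existsNP [t Pi_out]; rewrite (bigD1 t) //= /delta_plus indicatorF // addye //.
by rewrite gt_eqF // (lt_le_trans ltNy0) // sume_ge0 // => *; exact: indicator_ge0.
Qed.

Lemma P_objE (w : 'cV[R]_m) Pi : simplex w -> (forall t, nonneg (Pi t)) ->
  P_obj D w Pi = (\sum_t mxdot (D t) (Pi t))%:E.
Proof.
move=> w_simplex Pi_ge0; rewrite /P_obj /delta_simplex indicatorT // big1 => [|t _].
  by rewrite !add0e sumEFin.
by rewrite /delta_plus indicatorT.
Qed.

Lemma P_obj_out (w : 'cV[R]_m) Pi :
  ~ (simplex w /\ forall t, nonneg (Pi t)) -> P_obj D w Pi = +oo%E.
Proof.
move=> out; rewrite /P_obj sumEFin.
have [w_simplex|w_out] := pselect (simplex w).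
  rewrite sum_delta_plus_oo => [|Pi_ge0]; last exact: out.
  by rewrite /delta_simplex indicatorT // add0e addye.
rewrite /delta_simplex indicatorF // addye ?addye //.
by rewrite gt_eqF // (lt_le_trans ltNy0) // sume_ge0 // => *; exact: indicator_ge0.
Qed.

Hypothesis m_gt0 : (0 < m)%N.

Lemma D_objE (u : 'cV[R]_m) V z : (forall t, nonneg (V t)) ->
  D_obj a u V z = (simplex_support u + \sum_t mxdot (z t) (a t))%:E.
Proof.
move=> V_ge0; rewrite /D_obj (delta_simplex_conjE m_gt0) big1 => [|t _].
  by rewrite adde0 sumEFin.
by rewrite /delta_plus indicatorT.
Qed.

Lemma D_obj_out (u : 'cV[R]_m) V z :
  ~ (forall t, nonneg (V t)) -> D_obj a u V z = +oo%E.
Proof.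
move=> V_out; rewrite /D_obj (delta_simplex_conjE m_gt0) sum_delta_plus_oo //.
by rewrite sumEFin addey // addye.
Qed.

Lemma duality_gapE (u : 'cV[R]_m) V y z w Pi :
  D_feasible D u V y z -> P_feasible a w Pi ->
  duality_gap u z Pi = \sum_t mxdot (V t) (Pi t) + (simplex_support u - mxdot u w).
Proof.
move=> [u_sum V_slack] Pi_marg.
have -> : u = \sum_t y t by apply/eqP; rewrite eq_sym -subr_eq0 u_sum.
rewrite /duality_gap (eq_bigr _ (fun t _ => mxdot_marginals (Pi t) (V_slack t))).
under eq_bigr do rewrite (Pi_marg _).1 (Pi_marg _).2.
by rewrite !sumrB mxdot_suml; ring.
Qed.

Lemma weak_duality (u : 'cV[R]_m) V y z w Pi :
  D_feasible D u V y z -> (forall t, nonneg (V t)) ->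
  P_feasible a w Pi -> simplex w -> (forall t, nonneg (Pi t)) ->
  0 <= duality_gap u z Pi.
Proof.
move=> Df V_ge0 Pf w_simplex Pi_ge0.
rewrite (duality_gapE Df Pf) addr_ge0 ?subr_ge0 ?simplex_support_ge //.
by apply: sumr_ge0 => t _; exact: mxdot_ge0.
Qed.

Section FeasiblePair.
Variables (u : 'cV[R]_m) (V : forall t, 'M[R]_(m, ms t)) (y : 'I_N -> 'cV[R]_m)
  (z : forall t, 'cV[R]_(ms t)) (w : 'cV[R]_m) (Pi : forall t, 'M[R]_(m, ms t)).
Hypotheses (Df : D_feasible D u V y z) (V_ge0 : forall t, nonneg (V t))
  (Pf : P_feasible a w Pi) (w_simplex : simplex w) (Pi_ge0 : forall t, nonneg (Pi t)).

Lemma complementary_slackness : duality_gap u z Pi <= 0 ->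
  (forall t, mxdot (V t) (Pi t) = 0) /\ mxdot u w = simplex_support u.
Proof.
have VPi_ge0 t : 0 <= mxdot (V t) (Pi t) by exact: mxdot_ge0.
have uw_le := simplex_support_ge m_gt0 u w_simplex.
have sum_VPi_ge0 : 0 <= \sum_t mxdot (V t) (Pi t) by exact: sumr_ge0.
rewrite (duality_gapE Df Pf) => gap_le0; split; last by lra.
have sum_VPi0 : \sum_t mxdot (V t) (Pi t) = 0 by lra.
by move=> t; apply: (psumr_eq0P _ sum_VPi0) => // t' _; exact: VPi_ge0.
Qed.

Lemma optimal_of_gap_eq0 : duality_gap u z Pi = 0 ->
  D_optimal D a u V y z /\ P_optimal D a w Pi.
Proof.
move=> gap0; split.
  split=> //; split=> [|u' V' y' z' Df']; first by rewrite D_objE.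
  have [V'_ge0|V'_out] := pselect (forall t, nonneg (V' t)); last first.
    by rewrite (D_obj_out _ _ V'_out) leey.
  rewrite !D_objE // lee_fin.
  have := weak_duality Df' V'_ge0 Pf w_simplex Pi_ge0; move: gap0.
  by rewrite /duality_gap; lra.
split=> //; split=> [|w' Pi' Pf']; first by rewrite P_objE.
have [[w'_simplex Pi'_ge0]|out] := pselect (simplex w' /\ forall t, nonneg (Pi' t)).
  rewrite !P_objE // lee_fin.
  have := weak_duality Df V_ge0 Pf' w'_simplex Pi'_ge0; move: gap0.
  by rewrite /duality_gap; lra.
by rewrite (P_obj_out out) leey.
Qed.

Lemma KKT_of_complementary : (forall t, mxdot (V t) (Pi t) = 0) ->
  mxdot u w = simplex_support u -> D_KKT D a u V y z w Pi /\ P_KKT D a w Pi y z.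
Proof.
move=> VPi0 uw; have [u_sum V_slack] := Df.
have V_Pi_sub t : subdiff (@delta_plus R m (ms t)) (V t) (- Pi t).
  by apply/subdiff_delta_plusP; split.
have Pi_V_sub t : subdiff (@delta_plus R m (ms t)) (Pi t) (- V t).
  by apply/subdiff_delta_plusP; rewrite mxdotC.
split.
  split; first by apply/(subdiff_delta_simplex_conjP m_gt0); split.
  by split=> // t; split; last by split; [exact: (Pf t).1|split; [exact: (Pf t).2|]].
split.
  apply: subdiff_delta_simplex => //.
  by rewrite (_ : \sum_t y t = u) //; apply/eqP; rewrite -subr_eq0 u_sum.
move=> t; split; last exact: Pf.
by have := V_slack t; rewrite dual_slackE => <-.
Qed.

End FeasiblePair.

Lemma KKT_optimal (u : 'cV[R]_m) V y z lam Lam : D_KKT D a u V y z lam Lam ->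
  D_optimal D a u V y z /\ P_optimal D a lam Lam.
Proof.
move=> [/(subdiff_delta_simplex_conjP m_gt0) [lam_simplex u_lam] [u_sum KKT_t]].
have Lam_sub t := (subdiff_delta_plusP _ _).1 (KKT_t t).1.
have V_ge0 t : nonneg (V t) by have [] := Lam_sub t.
have Lam_ge0 t : nonneg (Lam t) by have [] := Lam_sub t.
have VLam0 t : mxdot (V t) (Lam t) = 0 by have [] := Lam_sub t.
have Df : D_feasible D u V y z by split=> // t; exact: (KKT_t t).2.2.2.
have Pf : P_feasible a lam Lam by move=> t; have [_ [? [? _]]] := KKT_t t.
apply: optimal_of_gap_eq0 => //.
by rewrite (duality_gapE Df Pf) big1 // u_lam subrr addr0.
Qed.

End Duality.

Lemma exists_gap_le0_pair (R : realType) (N m : nat) (ms : 'I_N -> nat)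
    (D : forall t, 'M[R]_(m, ms t)) (a : forall t, 'cV[R]_(ms t)) :
  (0 < N)%N -> (0 < m)%N -> (forall t i, 0 <= a t i 0) -> (forall t, \sum_i a t i 0 = 1) ->
  exists u V y z w Pi,
  [/\ D_feasible D u V y z, forall t, nonneg (V t), P_feasible a w Pi, simplex w
    & forall t, nonneg (Pi t)] /\ duality_gap D a u z Pi <= 0.
Proof.
move=> N_gt0 m_gt0 a_ge0 a_sum1.
have [w [P [y [z [th [[P_ge0 P_row P_col] [y_le V_ge0 gap_le0]]]]]]] :=
  combined_system_solution _ _ _ _ D a m_gt0 a_ge0 a_sum1.
pose Y t : 'cV[R]_m := \col_i y t i.
pose Z t : 'cV[R]_(ms t) := \col_j z t j.
pose U := \sum_t Y t.
exists U, (fun t => D t + Y t *m (ones R (ms t))^T + ones R m *m (Z t)^T), Y, Z,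
  (\col_i w i), (fun t => \matrix_(i, j) P t i j).
have U_le X : simplex X -> mxdot U X <= th.
  apply: mxdot_le_simplex => i.
  by rewrite summxE; under eq_bigr do rewrite mxE; exact: y_le.
split; first split.
- by split=> [|t]; [rewrite subrr | apply/dual_slackE].
- by move=> t i j; rewrite dual_slack_entryE /Y /Z !mxE V_ge0.
- move=> t; split; apply/matrixP => i k; rewrite ord1 ?mul_onesE ?tr_mul_onesE ?mxE.
    by rewrite -(P_row t); apply: eq_bigr => j _; rewrite mxE.
  by rewrite -(P_col t); apply: eq_bigr => j _; rewrite !mxE.
- have t0 : 'I_N := Ordinal N_gt0.
  split=> [|i]; last by rewrite mxE -(P_row t0 i) sumr_ge0.
  under eq_bigr do rewrite mxE -(P_row t0).
  by rewrite exchange_big -(a_sum1 t0); apply: eq_bigr => j _; rewrite P_col.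
- by move=> t i j; rewrite mxE.
apply: le_trans gap_le0; rewrite /duality_gap lerD ?lerD //.
- by rewrite le_eqVlt; apply/predU1l; do 3 (apply: eq_bigr => ? _); rewrite mxE.
- by apply: simplex_support_le.
rewrite le_eqVlt; apply/predU1l; apply: eq_bigr => t _.
by rewrite mxdot_colE; apply: eq_bigr => j _; rewrite mxE mulrC.
Qed.

Theorem proposition6 (R : realType) (N m : nat) (ms : 'I_N -> nat)
  (D : forall t : 'I_N, 'M[R]_(m, ms t)) (a : forall t : 'I_N, 'cV[R]_(ms t)) :
  (0 < N)%N -> (0 < m)%N -> (forall t, 0 < ms t)%N ->
  (forall t i, 0 <= a t i 0) -> (forall t, \sum_(i < ms t) a t i 0 = 1) ->
  [/\ (exists w Pi, P_optimal D a w Pi) /\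
      (exists w Pi y z, P_KKT D a w Pi y z),
      (exists u V y z, D_optimal D a u V y z) /\
      (exists u V y z lam Lam, D_KKT D a u V y z lam Lam)
    & forall u V y z lam Lam, D_KKT D a u V y z lam Lam ->
        D_optimal D a u V y z /\ P_optimal D a lam Lam].
Proof.
move=> N_gt0 m_gt0 _ a_ge0 a_sum1.
have [u [V [y [z [w [Pi [[Df V_ge0 Pf w_simplex Pi_ge0] gap_le0]]]]]]] :=
  exists_gap_le0_pair D N_gt0 m_gt0 a_ge0 a_sum1.
have [VPi0 uw] := complementary_slackness m_gt0 Df V_ge0 Pf w_simplex Pi_ge0 gap_le0.
have [DKKT PKKT] := KKT_of_complementary m_gt0 Df V_ge0 Pf w_simplex Pi_ge0 VPi0 uw.
have [Dopt Popt] := KKT_optimal m_gt0 DKKT.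
split; first by split; [exists w, Pi | exists w, Pi, y, z].
  by split; [exists u, V, y, z | exists u, V, y, z, w, Pi].
by move=> u' V' y' z' lam Lam; exact: KKT_optimal.
Qed.
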